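(* In the two-period, two-sequence crossover design ($\mathcal{S}^{\mathrm{obs}}=\{AB,BA\}$, $N_{AB},N_{BA}\ge1$) under complete randomization, suppose Assumption 1 holds and Assumption 2 holds with $k=1$, so that $\tau_2:=\tau_2(A)=\tau_2(B)$. Then the only unbiased linear estimator of $\tau_1$ is $\widehat Y_1(AB)-\widehat Y_1(BA)$, and the only unbiased linear estimator of $\tau_2$ is $\widehat Y_2(BA)-\widehat Y_2(AB)$.
   Context: Setup: $N$ units, treatments $A,B$, $T$ periods; sequences $\vec z\in\{A,B\}^T$, $\vec z_{[t_1,t_2]}=z_{t_1}\cdots z_{t_2}$. Complete randomization with fixed positive group sizes $N_{\vec z}$, $\vec z\in\mathcal{S}^{\mathrm{obs}}$. Fixed potential outcomes $Y_{it}(\vec z)$ for all $\vec z\in\{A,B\}^T$; observed $Y_{it}=Y_{it}(\vec Z_i)$; randomness only from assignment. $\bar Y_t(\vec z)=N^{-1}\sum_iY_{it}(\vec z)$, $\widehat Y_t(\vec z)=N_{\vec z}^{-1}\sum_iY_{it}\mathbf1(\vec Z_i=\vec z)$. Assumption 1: $Y_{it}(\vec z)=Y_{it}(\vec z')$ whenever $\vec z_{[1,t]}=\vec z'_{[1,t]}$. Assumption 2 (order $k$): $Y_{it}(\vec z)=Y_{it}(\vec z')$ whenever $\vec z_{[\max(1,t-k+1),t]}=\vec z'_{[\max(1,t-k+1),t]}$. Estimands: $\tau_1=\bar Y_1(A)-\bar Y_1(B)$, $\tau_2(z_1)=\bar Y_2(z_1A)-\bar Y_2(z_1B)$. A linear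 estimator is $\sum_{t}\sum_{\vec z\in\mathcal{S}^{\mathrm{obs}}}\tilde w_t(\vec z)\widehat Y_t(\vec z)$ with non-random weights; unbiased means its expectation equals the estimand for every finite population satisfying the stated assumptions. *)

From mathcomp Require Import all_boot all_order all_algebra.
Set Implicit Arguments. Unset Strict Implicit. Unset Printing Implicit Defensive.
Import Order.TTheory GRing.Theory Num.Theory.
Local Open Scope ring_scope.

Definition trtA : bool := true.
Definition trtB : bool := false.

Definition tseq (T : nat) := {ffun 'I_T -> bool}.

Definition seq2 (a b : bool) : tseq 2 :=
  [ffun s : 'I_2 => if val s == 0%N then a else b].
Definition sAA := seq2 trtA trtA.
Definition sAB := seq2 trtA trtB.
Definition sBA := seq2 trtB trtA.
Definition sBB := seq2 trtB trtB.

Definition per1 : 'I_2 := ord0.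
Definition per2 : 'I_2 := ord_max.

Definition potout (R : Type) (N T : nat) := 'I_N -> 'I_T -> tseq T -> R.

Definition assumption1 (R : Type) N T (Y : potout R N T) : Prop :=
  forall i (t : 'I_T) (z z' : tseq T),
    (forall s : 'I_T, (s <= t)%N -> z s = z' s) -> Y i t z = Y i t z'.

(* Assumption 2 of order k: Y_it(z) = Y_it(z') when z and z' agree on the
   window [max(1,t-k+1), t]; with 0-based s,t this is s <= t < s + k. *)
Definition assumption2 (R : Type) N T (k : nat) (Y : potout R N T) : Prop :=
  forall i (t : 'I_T) (z z' : tseq T),
    (forall s : 'I_T, (s <= t)%N -> (t < s + k)%N -> z s = z' s) ->
    Y i t z = Y i t z'.

Definition cr_assignments N T (Sobs : seq (tseq T)) (n : tseq T -> nat)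
  : {set {ffun 'I_N -> tseq T}} :=
  [set Z : {ffun 'I_N -> tseq T} |
     [forall i, Z i \in Sobs] && all (fun z => #|[set i | Z i == z]| == n z) Sobs].

Definition cr_expect (R : fieldType) N T (Sobs : seq (tseq T)) (n : tseq T -> nat)
  (f : {ffun 'I_N -> tseq T} -> R) : R :=
  (#|cr_assignments N Sobs n|%:R)^-1 *
    \sum_(Z in cr_assignments N Sobs n) f Z.

Definition Ybar (R : fieldType) N T (Y : potout R N T) (t : 'I_T) (z : tseq T) : R :=
  (N%:R)^-1 * \sum_(i < N) Y i t z.

Definition Yhat (R : fieldType) N T (n : tseq T -> nat) (Y : potout R N T)
  (Z : {ffun 'I_N -> tseq T}) (t : 'I_T) (z : tseq T) : R :=
  ((n z)%:R)^-1 * \sum_(i < N | Z i == z) Y i t (Z i).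

Definition lin_est (R : fieldType) N T (Sobs : seq (tseq T)) (n : tseq T -> nat)
  (w : 'I_T -> tseq T -> R) (Y : potout R N T) (Z : {ffun 'I_N -> tseq T}) : R :=
  \sum_(t < T) \sum_(z <- Sobs) w t z * Yhat n Y Z t z.

Definition Sobs_cross : seq (tseq 2) := [:: sAB; sBA].
Definition n_cross (nAB nBA : nat) (z : tseq 2) : nat :=
  if z == sAB then nAB else if z == sBA then nBA else 0%N.

(* Estimands (N = nAB + nBA units). Under Assumption 1, \bar Y_1(A) is
   \bar Y_1(z) for any z with z_1 = A; we take z = AA (resp. BB). *)
Definition tau1 (R : fieldType) N (Y : potout R N 2) : R :=
  Ybar Y per1 sAA - Ybar Y per1 sBB.
Definition tau2 (R : fieldType) N (z1 : bool) (Y : potout R N 2) : R :=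
  Ybar Y per2 (seq2 z1 trtA) - Ybar Y per2 (seq2 z1 trtB).

Definition unbiased_cross (R : fieldType) (nAB nBA : nat)
  (w : 'I_2 -> tseq 2 -> R) (tau : potout R (nAB + nBA) 2 -> R) : Prop :=
  forall Y : potout R (nAB + nBA) 2,
    assumption1 Y -> assumption2 1 Y ->
    cr_expect Sobs_cross (n_cross nAB nBA) (lin_est Sobs_cross (n_cross nAB nBA) w Y)
    = tau Y.

(* Under complete randomization every unit is equally likely to land in each
   group, so each group mean is unbiased for its finite-population mean and a
   linear estimator has expectation [\sum_t \sum_z w t z * Ybar Y t z].  With
   no carryover (Assumption 2, k = 1) [Ybar Y t z] only depends on [z t], so
   unbiasedness becomes an identity between two linear forms in the four
   values [Ybar Y t b]; populations with one nonzero such value pin down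
   every weight. *)
From mathcomp Require Import all_boot all_order all_algebra.
From mathcomp Require Import all_fingroup ring.
Set Implicit Arguments. Unset Strict Implicit. Unset Printing Implicit Defensive.
Import Order.TTheory GRing.Theory Num.Theory.
Local Open Scope ring_scope.

Section CompleteRandomization.
Variables (N T : nat) (Sobs : seq (tseq T)) (n : tseq T -> nat).
Local Notation C := (cr_assignments N Sobs n).

Definition cr_count (i : 'I_N) (z : tseq T) : nat := (\sum_(Z in C) (Z i == z))%N.

Definition permute_units (i j : 'I_N) (Z : {ffun 'I_N -> tseq T}) :
  {ffun 'I_N -> tseq T} := [ffun k => Z (tperm i j k)].

Lemma permute_unitsK i j : involutive (permute_units i j).
Proof. by move=> Z; apply/ffunP=> k; rewrite !ffunE tpermK. Qed.

Lemma permute_units_cr i j Z : Z \in C -> permute_units i j Z \in C.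
Proof.
rewrite !inE => /andP[/forallP inS /allP sizes]; apply/andP; split.
  by apply/forallP=> k; rewrite ffunE.
apply/allP=> z zS; have := sizes z zS.
suff -> : [set k | permute_units i j Z k == z] = tperm i j @^-1: [set k | Z k == z].
  by rewrite card_preimset //; apply: perm_inj.
by apply/setP=> k; rewrite !inE ffunE.
Qed.

Lemma cr_count_sym i j z : cr_count i z = cr_count j z.
Proof.
rewrite /cr_count (reindex_inj (can_inj (permute_unitsK i j))) /=.
apply: eq_big => [Z|Z _]; last by rewrite ffunE tpermL.
by apply/idP/idP => /(permute_units_cr i j); rewrite ?permute_unitsK.
Qed.

Lemma sum_cr_count z : z \in Sobs -> (\sum_(i < N) cr_count i z = #|C| * n z)%N.
Proof.
move=> zS; rewrite /cr_count exchange_big /= -sum_nat_const.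
apply: eq_bigr => Z; rewrite inE => /andP[_ /allP /(_ z zS) /eqP <-].
by rewrite -sum1_card [RHS]big_mkcond; apply: eq_bigr => k _; rewrite inE; case: eqP.
Qed.

Lemma cr_countE i z : z \in Sobs -> (N * cr_count i z = #|C| * n z)%N.
Proof.
move=> zS; rewrite -(sum_cr_count zS) (eq_bigr (fun _ => cr_count i z)).
  by rewrite sum_nat_const card_ord.
by move=> k _; apply: cr_count_sym.
Qed.

Variable R : numFieldType.
Hypothesis (C_gt0 : (0 < #|C|)%N) (N_gt0 : (0 < N)%N).
Hypothesis n_gt0 : forall z, z \in Sobs -> (0 < n z)%N.

Lemma cr_expect_Yhat (Y : potout R N T) t z : z \in Sobs ->
  cr_expect Sobs n (fun Z => Yhat n Y Z t z) = Ybar Y t z.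
Proof.
move=> zS; rewrite /cr_expect /Yhat /Ybar -mulr_sumr.
have -> : \sum_(Z in C) \sum_(i < N | Z i == z) Y i t (Z i) =
          \sum_(i < N) Y i t z * (cr_count i z)%:R.
  under eq_bigr => Z _ do rewrite big_mkcond /=.
  rewrite exchange_big; apply: eq_bigr => i _.
  rewrite /cr_count mulr_natr -sumrMnr; apply: eq_bigr => Z _.
  by rewrite mulrb; case: eqP => // ->.
have nat_neq0 m : (0 < m)%N -> (m%:R : R) != 0.
  by move=> m_gt0; rewrite pnatr_eq0 -lt0n.
have countE i : (cr_count i z)%:R = #|C|%:R * (n z)%:R / N%:R :> R.
  apply: (mulfI (nat_neq0 _ N_gt0)).
  by rewrite -!natrM cr_countE // natrM mulrCA divff ?mulr1 ?nat_neq0.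
under eq_bigr do rewrite countE.
rewrite -mulr_suml.
by field; rewrite !nat_neq0 ?n_gt0.
Qed.

Lemma cr_expect_lin_est w (Y : potout R N T) :
  cr_expect Sobs n (lin_est Sobs n w Y) =
  \sum_(t < T) \sum_(z <- Sobs) w t z * Ybar Y t z.
Proof.
rewrite /cr_expect /lin_est exchange_big /= mulr_sumr; apply: eq_bigr => t _.
rewrite exchange_big /= mulr_sumr big_seq [RHS]big_seq; apply: eq_bigr => z zS.
by rewrite -cr_expect_Yhat // /cr_expect -mulr_sumr mulrCA.
Qed.

End CompleteRandomization.

Definition Ycurrent (R : Type) N T (g : 'I_T -> bool -> R) : potout R N T :=
  fun i t z => g t (z t).

Lemma assumption2_Ycurrent (R : Type) N T k g :
  (0 < k)%N -> assumption2 k (@Ycurrent R N T g).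
Proof. by move=> k_gt0 i t z z' agree; rewrite /Ycurrent agree // -addn1 leq_add2l. Qed.

Lemma assumption1_Ycurrent (R : Type) N T g : assumption1 (@Ycurrent R N T g).
Proof. by move=> i t z z' agree; rewrite /Ycurrent agree. Qed.

Lemma Ybar_Ycurrent (R : numFieldType) N T (g : 'I_T -> bool -> R) t z :
  (0 < N)%N -> Ybar (Ycurrent g : potout R N T) t z = g t (z t).
Proof.
move=> N_gt0; rewrite /Ybar /Ycurrent sumr_const card_ord -(mulr_natl (g t (z t))) mulKf //.
by rewrite pnatr_eq0 -lt0n.
Qed.

Lemma assumption2_1_current (R : Type) N T (Y : potout R N T) i t (z z' : tseq T) :
  assumption2 1 Y -> z t = z' t -> Y i t z = Y i t z'.
Proof.
move=> noCarry ztE; apply: noCarry => s le_st; rewrite addn1 ltnS => le_ts.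
by have -> : s = t by apply/val_inj/eqP; rewrite eqn_leq le_st le_ts.
Qed.

Lemma Ybar_current (R : fieldType) N T (Y : potout R N T) t (z z' : tseq T) :
  assumption2 1 Y -> z t = z' t -> Ybar Y t z = Ybar Y t z'.
Proof.
by move=> noCarry ztE; rewrite /Ybar; congr (_ * _); apply: eq_bigr => i _;
  apply: assumption2_1_current.
Qed.

Lemma seq2_diag (b : bool) (t : 'I_2) : seq2 b b t = b.
Proof. by rewrite ffunE; case: ifP. Qed.

Lemma sAB_neq_sBA : (sAB == sBA) = false.
Proof. by apply/eqP => /(congr1 (fun f : tseq 2 => f ord0)); rewrite !ffunE. Qed.

Lemma n_cross_AB a b : n_cross a b sAB = a.
Proof. by rewrite /n_cross eqxx. Qed.

Lemma n_cross_BA a b : n_cross a b sBA = b.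
Proof. by rewrite /n_cross eq_sym sAB_neq_sBA eqxx. Qed.

Lemma card_ord_lt m k : #|[set x : 'I_(m + k) | (x < m)%N]| = m.
Proof.
have -> : [set x : 'I_(m + k) | (x < m)%N] = [set lshift k j | j : 'I_m].
  apply/setP => x; rewrite inE; apply/idP/imsetP => [x_lt|[j _ ->] /=].
    by exists (Ordinal x_lt) => //; apply: val_inj.
  exact: ltn_ord.
by rewrite card_imset ?card_ord //; apply: lshift_inj.
Qed.

Lemma card_ord_ge m k : #|[set x : 'I_(m + k) | (m <= x)%N]| = k.
Proof.
have -> : [set x : 'I_(m + k) | (m <= x)%N] = [set rshift m j | j : 'I_k].
  apply/setP => x; rewrite inE; apply/idP/imsetP => [m_le|[j _ ->] /=].
    have x_lt : (x - m < k)%N by rewrite ltn_subLR ?ltn_ord.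
    by exists (Ordinal x_lt) => //; apply: val_inj; rewrite /= subnKC.
  exact: leq_addr.
by rewrite card_imset ?card_ord //; apply: rshift_inj.
Qed.

Lemma cr_cross_gt0 a b : (0 < #|cr_assignments (a + b) Sobs_cross (n_cross a b)|)%N.
Proof.
apply/card_gt0P; exists [ffun k : 'I_(a + b) => if (k < a)%N then sAB else sBA].
rewrite inE; apply/andP; split.
  by apply/forallP => k; rewrite ffunE; case: ifP; rewrite !inE eqxx ?orbT.
rewrite /= n_cross_AB n_cross_BA andbT; apply/andP; split.
  rewrite -[X in _ == X](card_ord_lt a b); apply/eqP; apply: eq_card => k.
  by rewrite !inE ffunE; case: ifP; rewrite ?eqxx // eq_sym sAB_neq_sBA.
rewrite -[X in _ == X](card_ord_ge a b); apply/eqP; apply: eq_card => k.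
by rewrite !inE ffunE; case: ltnP; rewrite ?sAB_neq_sBA ?eqxx.
Qed.

Lemma cr_expect_cross (R : numFieldType) a b w (Y : potout R (a + b) 2) :
  (0 < a)%N -> (0 < b)%N ->
  cr_expect Sobs_cross (n_cross a b) (lin_est Sobs_cross (n_cross a b) w Y) =
  \sum_(t < 2) \sum_(z <- Sobs_cross) w t z * Ybar Y t z.
Proof.
move=> a_gt0 b_gt0; apply: cr_expect_lin_est; rewrite ?cr_cross_gt0 ?addn_gt0 ?a_gt0 //.
by move=> z; rewrite !inE => /orP[] /eqP ->; rewrite ?n_cross_AB ?n_cross_BA.
Qed.

Lemma unbiased_crossP (R : numFieldType) a b w (tau : potout R (a + b) 2 -> R) :
  (0 < a)%N -> (0 < b)%N ->
  (forall Y Y', (forall t z, Ybar Y t z = Ybar Y' t z) -> tau Y = tau Y') ->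
  unbiased_cross w tau <->
  forall g : 'I_2 -> bool -> R,
    \sum_(t < 2) \sum_(z <- Sobs_cross) w t z * g t (z t) = tau (Ycurrent g).
Proof.
move=> a_gt0 b_gt0 tau_Ybar; have N_gt0 : (0 < a + b)%N by rewrite addn_gt0 a_gt0.
rewrite /unbiased_cross; split=> [unbiased g | formsE Y _ noCarry].
  rewrite -(unbiased _ (assumption1_Ycurrent g) (assumption2_Ycurrent _ _)) //.
  rewrite cr_expect_cross //.
  by apply: eq_bigr => t _; apply: eq_bigr => z _; rewrite Ybar_Ycurrent.
pose g t b := Ybar Y t (seq2 b b).
have YbarE t z : Ybar Y t z = g t (z t).
  by apply: Ybar_current; rewrite ?seq2_diag.
rewrite cr_expect_cross //; under eq_bigr do under eq_bigr do rewrite YbarE.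
by rewrite formsE; apply: tau_Ybar => t z; rewrite Ybar_Ycurrent.
Qed.

Lemma cross_weightsP (R : numFieldType) (w : 'I_2 -> tseq 2 -> R) c1A c1B c2A c2B :
  (forall g : 'I_2 -> bool -> R,
     \sum_(t < 2) \sum_(z <- Sobs_cross) w t z * g t (z t) =
     c1A * g per1 true + c1B * g per1 false + c2A * g per2 true + c2B * g per2 false)
  <-> [/\ w per1 sAB = c1A, w per1 sBA = c1B, w per2 sAB = c2B & w per2 sBA = c2A].
Proof.
have sumE (g : 'I_2 -> bool -> R) :
    \sum_(t < 2) \sum_(z <- Sobs_cross) w t z * g t (z t) =
    w per1 sAB * g per1 true + w per1 sBA * g per1 false +
    w per2 sAB * g per2 false + w per2 sBA * g per2 true.
  rewrite big_ord_recr big_ord1 /= !big_cons !big_nil !ffunE /= !addr0 addrA.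
  by congr (w _ _ * g _ _ + w _ _ * g _ _ + _ + _); apply: val_inj.
split=> [formsE | [<- <- <- <-] g]; last by rewrite sumE; ring.
pose unit_at (t0 : 'I_2) (b0 : bool) t b : R := ((t == t0) && (b == b0))%:R.
have := formsE (unit_at per1 true); have := formsE (unit_at per1 false).
have := formsE (unit_at per2 true); have := formsE (unit_at per2 false).
rewrite !sumE /unit_at /= !(mulr1, mulr0, addr0, add0r).
by move=> -> -> -> ->.
Qed.

Lemma tau1_Ycurrent (R : numFieldType) N (g : 'I_2 -> bool -> R) : (0 < N)%N ->
  tau1 (Ycurrent g : potout R N 2) = g per1 true - g per1 false.
Proof. by move=> N_gt0; rewrite /tau1 !Ybar_Ycurrent // !ffunE. Qed.

Lemma tau2_Ycurrent (R : numFieldType) N z1 (g : 'I_2 -> bool -> R) : (0 < N)%N ->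
  tau2 z1 (Ycurrent g : potout R N 2) = g per2 true - g per2 false.
Proof. by move=> N_gt0; rewrite /tau2 !Ybar_Ycurrent // !ffunE. Qed.

Theorem proposition5 (R : realFieldType) (nAB nBA : nat)
  (hAB : (1 <= nAB)%N) (hBA : (1 <= nBA)%N) :
  (forall w : 'I_2 -> tseq 2 -> R,
     @unbiased_cross R nAB nBA w (@tau1 R (nAB + nBA)) <->
     [/\ w per1 sAB = 1, w per1 sBA = -1, w per2 sAB = 0 & w per2 sBA = 0])
  /\
  (forall w : 'I_2 -> tseq 2 -> R,
     @unbiased_cross R nAB nBA w (@tau2 R (nAB + nBA) trtA) <->
     [/\ w per1 sAB = 0, w per1 sBA = 0, w per2 sAB = -1 & w per2 sBA = 1]).
Proof.
have N_gt0 : (0 < nAB + nBA)%N by rewrite addn_gt0 hAB.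
split=> w.
- rewrite unbiased_crossP -?(cross_weightsP w 1 (-1) 0 0) //; last first.
    by move=> Y Y' YbarE; rewrite /tau1 !YbarE.
  by split=> formsE g; rewrite formsE tau1_Ycurrent //; ring.
- rewrite unbiased_crossP -?(cross_weightsP w 0 0 1 (-1)) //; last first.
    by move=> Y Y' YbarE; rewrite /tau2 !YbarE.
  by split=> formsE g; rewrite formsE tau2_Ycurrent //; ring.
Qed.
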